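(* Let $f(x)=\sum_{n\ge 1} f_n \frac{x^n}{n!}$ be a formal power series over a field of characteristic zero with $f_1=1$, so that $f'(x)=1+\sum_{n\ge1}f_{n+1}\frac{x^n}{n!}$ and $f$ has a compositional inverse $\bar f(x)$ (i.e. $f(\bar f(x))=\bar f(f(x))=x$). Then the production matrix of the exponential Riordan array $[f'(x), f(x)]$ equals $U\cdot\left[\frac{1}{\bar f'(x)}, x\right]$, where $U=(u_{n,k})_{n,k\ge 0}$ is the shift matrix with $u_{n,k}=1$ if $k=n+1$ and $u_{n,k}=0$ otherwise. Equivalently, if $r_{n,k}=\frac{n!}{k!}[x^n]\frac{x^k}{\bar f'(x)}$ denotes the $(n,k)$-entry of $\left[\frac{1}{\bar f'(x)}, x\right]$, then the $(n,k)$-entry of the production matrix of $[f'(x),f(x)]$ is $r_{n+1,k}$ for all $n,k\ge 0$ (i.e. the production matrix is $\left[\frac{1}{\bar f'(x)}, x\right]$ with its first row removed).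
   Context: For power series $g(x)=1+\sum_{n\ge1} g_n\frac{x^n}{n!}$ and $f(x)=x+\sum_{n\ge 2} f_n\frac{x^n}{n!}$, the exponential Riordan array $[g(x),f(x)]$ is the infinite lower-triangular matrix $(t_{n,k})_{n,k\ge0}$ with $t_{n,k}=\frac{n!}{k!}[x^n]\,g(x)f(x)^k$, where $[x^n]$ extracts the coefficient of $x^n$; its bivariate generating function is $g(x)e^{yf(x)}=\sum_{n,k} t_{n,k}\frac{x^n}{n!}y^k$. The production matrix of $[g(x),f(x)]$ is the infinite matrix $(p_{n,k})_{n,k\ge0}$ defined by $\sum_{n,k\ge0} p_{n,k}\frac{x^n}{n!}y^k = e^{xy}\bigl(Z(x)+yA(x)\bigr)$ (exponential in $x$, ordinary in $y$), where $A(x)=f'(\bar f(x))$ and $Z(x)=\frac{g'(\bar f(x))}{g(\bar f(x))}$, with $\bar f$ the compositional inverse of $f$. *)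

(* Formal power series over a field R, represented by their
   ORDINARY coefficient sequences: a : nat -> R stands for sum_n a n x^n.
   (The exponential coefficient f_n of the paper is n! * a n.) *)
From mathcomp Require Import all_boot all_order all_algebra.
Set Implicit Arguments. Unset Strict Implicit. Unset Printing Implicit Defensive.
Import Order.TTheory GRing.Theory Num.Theory.
Local Open Scope ring_scope.

Definition fps (R : fieldType) := nat -> R.

Section FPS.
Variable R : fieldType.

Definition fps1 : fps R := fun n => (n == 0)%:R.
Definition fpsX : fps R := fun n => (n == 1)%:R.

Definition fps_mul (a b : fps R) : fps R :=
  fun n => \sum_(i < n.+1) a i * b (n - i)%N.

Fixpoint fps_pow (a : fps R) (k : nat) : fps R :=
  if k is k'.+1 then fps_mul a (fps_pow a k') else fps1.

(* composition a(b(x)); meaningful when b 0 = 0 *)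
Definition fps_comp (a b : fps R) : fps R :=
  fun n => \sum_(k < n.+1) a k * fps_pow b k n.

Definition fps_deriv (a : fps R) : fps R := fun n => a n.+1 *+ n.+1.

Definition riordan (g f : fps R) (n k : nat) : R :=
  n`!%:R / k`!%:R * fps_mul g (fps_pow f k) n.

(* Bivariate series, ordinary coefficients: c i j is the coefficient of x^i y^j. *)
Definition bfps := nat -> nat -> R.
Definition bfps_mul (a b : bfps) : bfps :=
  fun n k => \sum_(i < n.+1) \sum_(j < k.+1) a i j * b (n - i)%N (k - j)%N.

(* e^{xy} *)
Definition bexpxy : bfps := fun i j => if i == j then (i`!%:R)^-1 else 0.
(* Z(x) + y A(x) *)
Definition bZA (Z A : fps R) : bfps :=
  fun i j => if j == 0%N then Z i else if j == 1%N then A i else 0.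

(* Production matrix entry p_{n,k}, defined by
   sum_{n,k} p_{n,k} x^n/n! y^k = e^{xy} (Z(x) + y A(x)). *)
Definition production_entry (Z A : fps R) (n k : nat) : R :=
  n`!%:R * bfps_mul bexpxy (bZA Z A) n k.

End FPS.

From mathcomp Require Import all_boot all_order all_algebra zify ring.
From Stdlib Require Import FunctionalExtensionality.
Import GRing.Theory.
Local Open Scope ring_scope.

(* Differentiating f(fbar(x)) = x gives f'(fbar) fbar' = 1, so A = f'(fbar) is
   h = 1/fbar'; differentiating A = f'(fbar) gives h' = f''(fbar) fbar' = Z A fbar'
   = Z.  Hence e^{xy} (Z(x) + y A(x)) = e^{xy} (h'(x) + y h(x)) is the
   x-derivative of h(x) e^{xy}, the generating function of [h, x], and taking
   the x-derivative of an exponential generating function shifts its rows up. *)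

Section FormalPowerSeries.
Context {R : fieldType}.
Implicit Types (a b c : fps R) (p q : {poly R}).

(* Identities between series are transferred from {poly R}: a coefficient of
   index at most n only depends on the coefficients of index at most n. *)
Definition agree_upto n p a := forall i, (i <= n)%N -> p`_i = a i.

Definition fps_trunc n a : {poly R} := \poly_(i < n.+1) a i.

Lemma agree_upto_trunc n a : agree_upto n (fps_trunc n a) a.
Proof. by move=> i le_in; rewrite coef_poly ltnS le_in. Qed.

Lemma agree_upto_le {m n p a} :
  (m <= n)%N -> agree_upto n p a -> agree_upto m p a.
Proof. by move=> le_mn pa i le_im; apply/pa/(leq_trans le_im). Qed.

Lemma agree_upto1 n : agree_upto n 1 (fps1 R).
Proof. by move=> i _; rewrite coef1. Qed.

Lemma agree_uptoX n : agree_upto n 'X (fpsX R).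
Proof. by move=> i _; rewrite coefX. Qed.

Lemma agree_upto_mul {n p q a b} :
  agree_upto n p a -> agree_upto n q b -> agree_upto n (p * q) (fps_mul a b).
Proof.
move=> pa qb m le_mn; rewrite coefM; apply: eq_bigr => [[i /= lt_im]] _.
by rewrite pa ?qb //; lia.
Qed.

Lemma agree_upto_pow {n p a} k :
  agree_upto n p a -> agree_upto n (p ^+ k) (fps_pow a k).
Proof.
move=> pa; elim: k => [|k IHk] /=; first exact: agree_upto1.
by rewrite exprS; apply: agree_upto_mul.
Qed.

Lemma agree_upto_deriv {n p a} :
  agree_upto n.+1 p a -> agree_upto n p^`() (fps_deriv a).
Proof. by move=> pa i le_in; rewrite coef_deriv pa. Qed.

Lemma fps_pow_eq0 a k n : a 0%N = 0 -> (n < k)%N -> fps_pow a k n = 0.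
Proof.
move=> a0; elim: k n => [|k IHk] n //= lt_nk.
rewrite /fps_mul big1 // => -[[|i] lt_in] _ /=.
  by rewrite a0 mul0r.
by rewrite IHk ?mulr0 //; lia.
Qed.

Lemma sum_ord_tail0 (F : nat -> R) m n : (m <= n)%N ->
  (forall i, (m <= i < n)%N -> F i = 0) -> \sum_(i < n) F i = \sum_(i < m) F i.
Proof.
move=> le_mn F0; rewrite (big_ord_widen _ F le_mn) [RHS]big_mkcond.
by apply: eq_bigr => i _; case: ltnP => // le_mi; rewrite F0 ?le_mi ?ltn_ord.
Qed.

Lemma agree_upto_comp {n p q a b} : b 0%N = 0 ->
  agree_upto n p a -> agree_upto n q b -> agree_upto n (p \Po q) (fps_comp a b).
Proof.
move=> b0 pa qb m le_mn; rewrite comp_polyE coef_sum /fps_comp.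
under eq_bigr do rewrite coefZ.
have qXb i : (q ^+ i)`_m = fps_pow b i m by exact: agree_upto_pow i qb _ le_mn.
rewrite -(@sum_ord_tail0 (fun i => p`_i * (q ^+ i)`_m) _ _ (leq_maxl _ m.+1)); last first.
  by move=> i /andP[le_pi _]; rewrite nth_default // mul0r.
rewrite (@sum_ord_tail0 (fun i => p`_i * (q ^+ i)`_m) m.+1 _ (leq_maxr (size p) _));
  last first.
  by move=> i /andP[lt_mi _]; rewrite qXb fps_pow_eq0 ?mulr0.
by apply: eq_bigr => -[i /= lt_im] _; rewrite qXb pa //; lia.
Qed.

Lemma fps_mulC : commutative (@fps_mul R).
Proof.
move=> a b; apply: functional_extensionality => n.
have t := agree_upto_trunc n.
by rewrite -(agree_upto_mul (t a) (t b)) // mulrC (agree_upto_mul (t b) (t a)).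
Qed.

Lemma fps_mulA : associative (@fps_mul R).
Proof.
move=> a b c; apply: functional_extensionality => n.
have t := agree_upto_trunc n.
rewrite -(agree_upto_mul (t a) (agree_upto_mul (t b) (t c))) // mulrA.
by rewrite (agree_upto_mul (agree_upto_mul (t a) (t b)) (t c)).
Qed.

Lemma fps_mulr1 : right_id (fps1 R) (@fps_mul R).
Proof.
move=> a; apply: functional_extensionality => n.
rewrite -(agree_upto_mul (agree_upto_trunc n a) (agree_upto1 n)) //.
by rewrite mulr1 agree_upto_trunc.
Qed.

Lemma fps_mul_powX a k n :
  fps_mul a (fps_pow (fpsX R) k) n = if (k <= n)%N then a (n - k)%N else 0.
Proof.
have Xk := agree_upto_pow k (agree_uptoX n).
rewrite -(agree_upto_mul (agree_upto_trunc n a) Xk) // coefMXn ltnNge.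
by case: leqP => // le_kn; rewrite agree_upto_trunc ?leq_subr.
Qed.

Lemma fps_deriv_X : fps_deriv (fpsX R) = fps1 R.
Proof.
by apply: functional_extensionality => -[|n]; rewrite /fps_deriv /fpsX /fps1 /= ?mul0rn.
Qed.

Lemma fps_deriv_comp a b : b 0%N = 0 ->
  fps_deriv (fps_comp a b) = fps_mul (fps_comp (fps_deriv a) b) (fps_deriv b).
Proof.
move=> b0; apply: functional_extensionality => n.
have [ta tb] := (agree_upto_trunc n.+1 a, agree_upto_trunc n.+1 b).
have [da db] := (agree_upto_deriv ta, agree_upto_deriv tb).
rewrite -(agree_upto_deriv (agree_upto_comp b0 ta tb)) // deriv_comp.
by rewrite (agree_upto_mul (agree_upto_comp b0 da (agree_upto_le (leqnSn n) tb)) db).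
Qed.

Lemma fps_mul_deriv_comp_inverse {a b} : b 0%N = 0 -> fps_comp a b = fpsX R ->
  fps_mul (fps_comp (fps_deriv a) b) (fps_deriv b) = fps1 R.
Proof. by move=> b0 ab; rewrite -fps_deriv_comp // ab fps_deriv_X. Qed.

Lemma fps_inv_uniq {a b c} : fps_mul a c = fps1 R -> fps_mul b c = fps1 R -> a = b.
Proof.
move=> ac bc; rewrite -[a]fps_mulr1 -bc (fps_mulC b) fps_mulA ac.
by rewrite fps_mulC fps_mulr1.
Qed.

End FormalPowerSeries.

Section ProductionMatrix.
Context {R : fieldType}.
Implicit Types (Z A h : fps R) (c : bfps R).

Lemma bexpxy_mulE c n k : bfps_mul (bexpxy R) c n k =
  \sum_(i < n.+1 | (i <= k)%N) (i`!%:R)^-1 * c (n - i)%N (k - i)%N.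
Proof.
rewrite /bfps_mul [RHS]big_mkcond; apply: eq_bigr => i _ /=.
transitivity (\sum_(j < k.+1 | j == i :> nat) (i`!%:R)^-1 * c (n - i)%N (k - j)%N).
  rewrite [RHS]big_mkcond; apply: eq_bigr => j _.
  by rewrite /bexpxy eq_sym; case: eqP => [->|_]; rewrite ?mul0r.
by rewrite (@big_ord1_eq _ _ _ (fun j => (i`!%:R)^-1 * c (n - i)%N (k - j)%N)) ltnS.
Qed.

Lemma production_entryE Z A n k : production_entry Z A n k =
  n`!%:R * ((if (k <= n)%N then Z (n - k)%N / k`!%:R else 0)
          + (if (0 < k)%N && (k.-1 <= n)%N then A (n - k.-1)%N / k.-1`!%:R else 0)).
Proof.
rewrite /production_entry bexpxy_mulE; congr (_ * _).
transitivity (\sum_(i < n.+1) ((if i == k :> nat then Z (n - k)%N / k`!%:R else 0)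
   + (if (0 < k)%N && (i == k.-1 :> nat) then A (n - i)%N / i`!%:R else 0))).
  rewrite big_mkcond; apply: eq_bigr => i _ /=; rewrite /bZA.
  case: (leqP i k) => [le_ik|lt_ki]; last by rewrite !ifN ?addr0 //; lia.
  case ki: (k - i)%N => [|[|d]] /=.
  - have ->: k = i by lia.
    by rewrite eqxx ifN ?addr0 1?mulrC //; lia.
  - have ->: k = i.+1 by lia.
    by rewrite ifN ?add0r 1?mulrC /= ?eqxx //; lia.
  - by rewrite !ifN ?addr0 ?mulr0 //; lia.
rewrite big_split /= -!big_mkcond (@big_ord1_eq _ _ _ (fun=> Z (n - k)%N / k`!%:R)) ltnS.
rewrite (@big_ord1_cond_eq _ _ _ (fun i => A (n - i)%N / i`!%:R) (fun=> (0 < k)%N)).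
by rewrite ltnS andbC.
Qed.

Lemma production_entry_deriv_shift h n k : [pchar R] =i pred0 ->
  production_entry (fps_deriv h) h n k = riordan h (fpsX R) n.+1 k.
Proof.
move=> char0; rewrite production_entryE /riordan fps_mul_powX /fps_deriv.
have nat_neq0 m : (0 < m)%N -> (m%:R : R) != 0.
  by move=> m_gt0; rewrite (pcharf0P R).1 // -lt0n.
have fact_neq0 m : (m`!%:R : R) != 0 by rewrite nat_neq0 ?fact_gt0.
case: k => [|k] /=.
  rewrite !subn0 factS natrM -mulr_natr.
  by field; rewrite fact_neq0.
case: (ltngtP k n) => [lt_kn|lt_nk|<-]; last first.
- rewrite ltnSn subSS subnn add0r.
  by field; rewrite !fact_neq0.
- by rewrite ifN ?addr0 ?mulr0 //; lia.
have [d ->] : exists d, n = (k + d).+1 by exists (n - k.+1)%N; lia.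
rewrite ifT; last by lia.
have [-> -> ->] : [/\ (k + d).+1 - k.+1 = d, (k + d).+1 - k = d.+1
                    & (k + d).+2 - k.+1 = d.+1]%N by split; lia.
rewrite (factS (k + d).+1) (factS k) !natrM -mulr_natr.
by field; rewrite fact_neq0 addrC natr1 nat_neq0.
Qed.

End ProductionMatrix.

Theorem mainTheorem1 (R : fieldType) (char0 : [pchar R] =i pred0)
    (f fbar Z A h : fps R) :
  f 0%N = 0 -> f 1%N = 1 ->
  fbar 0%N = 0 ->
  fps_comp f fbar = fpsX R -> fps_comp fbar f = fpsX R ->
  A = fps_comp (fps_deriv f) fbar ->
  fps_mul Z (fps_comp (fps_deriv f) fbar) = fps_comp (fps_deriv (fps_deriv f)) fbar ->
  fps_mul h (fps_deriv fbar) = fps1 R ->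
  forall n k : nat, production_entry Z A n k = riordan h (fpsX R) n.+1 k.
Proof.
move=> _ _ fbar0 f_fbar _ -> Z_def h_def n k.
have A_inv := fps_mul_deriv_comp_inverse fbar0 f_fbar.
have A_h : fps_comp (fps_deriv f) fbar = h := fps_inv_uniq A_inv h_def.
have Z_h : Z = fps_deriv h.
  by rewrite -A_h fps_deriv_comp // -Z_def -fps_mulA A_inv fps_mulr1.
by rewrite Z_h A_h production_entry_deriv_shift.
Qed.
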